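(* Fix $T>0$. On $\Omega^T=\{Z(T)>0\}$, the random set $\Lambda^T$ is an optional line with respect to the filtration $(\mathcal G_I)_{I\in\mathcal I}$, that is, $\{\Lambda^T\preceq I\}\in\mathcal G_I$ for all stopping lines $I\in\mathcal I$.
   Context: Ulam–Harris labels $U=\bigcup_{n\ge0}\mathbb N^n$, $\mathbb N^0=\{0\}$ (root $0$, omitted in concatenations $xk$); mother $\mathfrak m x$, rank $\mathfrak r x$; $x\preceq y$ iff $x=\mathfrak m^ky$ for some $k\ge0$. Neveu trees: $u\subseteq U$ containing $0$, closed under $\mathfrak m$, children of $x$ labelled $x1,\dots,xn_x$. Branching trees $\Omega=[0,\infty)^2\times\bigcup_u(\{u\}\times(0,\infty)^u)$ with coordinates birth time $\tau$, age $\alpha$, Neveu tree $\gamma$, lengths $L_x$; $\tau_0=\tau$, $\tau_x=\tau_{\mathfrak m x}+L_{\mathfrak m x}$; subtree $\mathcal T_x$ rooted at $x$ (with birth time $\tau_x$ and lengths $L_{xy}$). $Z(t)=\sum_{x\in\gamma}\mathbf 1_{(0,L_x]}(t-\tau_x)$, $Z_x=Z\circ\mathcal T_x$ (defined when $x\in\gamma$). A stopping line is $I\subseteq U$ no two distinct elements of which are $\preceq$-comparable; $\mathcal I$ is the set of stopping lines. For stopping lines $I,I'$, $I\preceq I'$ means every branch of $I'$ has an ancestor-or-self in $I$. For $I\in\mathcal I$, $\mathcal K_I$ is the pruned tree $(\tau,\alpha,\kappa_I,(L_y)_{y\in\kappa_I})$ where $\kappa_I$ is $\gamma$ with all $y\succeq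 x$ for $x\in I\cap\gamma$ removed ($\mathcal K_I$ is the whole tree if $I\cap\gamma=\emptyset$); $\mathcal F_I=\sigma(\mathcal K_I)$ and $\mathcal G_I=\mathcal F_I\vee\sigma(\{Z_x(T)>0\}:x\in I)$. Extant branches $\zeta^T=\{x\in\gamma:\tau_x<T\le\tau_x+L_x\}$; on $\{Z(T)>0\}$, $\lambda^T$ is the $\preceq$-maximal $y$ with $y\preceq x$ for all $x\in\zeta^T$, and $\Lambda^T=\{\lambda^Tk\in\gamma: Z_{\lambda^Tk}(T)>0\}$ (a stopping line, empty iff $Z(T)=1$). *)

From HB Require Import structures.
From mathcomp Require Import all_boot all_order all_algebra.
From mathcomp Require Import all_classical all_reals all_analysis.
Set Implicit Arguments. Unset Strict Implicit. Unset Printing Implicit Defensive.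
Import Order.TTheory GRing.Theory Num.Theory.
Local Open Scope classical_set_scope.
Local Open Scope ring_scope.

(* Ulam--Harris labels: a label x1...xn is the sequence [:: x1; ...; xn];
   the root 0 is [::]; the child xk is rcons x k; x ⪯ y iff prefix x y. *)
Definition label := seq nat.
Definition ulam (x : label) : Prop := all (fun k => 0 < k)%N x.
Definition anc (x y : label) : Prop := prefix x y.

Definition neveu (g : set label) : Prop :=
  [/\ g [::],
      (forall x, g x -> ulam x),
      (forall x k, g (rcons x k) -> g x) &
      (forall x, g x -> exists n : nat, forall k, g (rcons x k) <-> (0 < k <= n)%N)].

Record rtree (R : realType) := RTree {
  rtau : R; ralpha : R; rgamma : set label; rL : label -> R }.

(* the space Omega of branching trees: L_x > 0 on gamma and the
   (irrelevant) coordinates L_x off gamma are normalized to 0 so that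
   Omega is in bijection with [0,oo)^2 x U_u ({u} x (0,oo)^u). *)
Definition valid (R : realType) (t : rtree R) : Prop :=
  [/\ 0 <= rtau t, 0 <= ralpha t, neveu (rgamma t),
      (forall x, rgamma t x -> 0 < rL t x) &
      (forall x, ~ rgamma t x -> rL t x = 0)].

Record Omega (R : realType) := MkOmega { tr : rtree R; tr_valid : valid tr }.

Definition rtree_gens (R : realType) : set (set (rtree R)) :=
  [set [set t | B (rtau t)] | B in [set B : set R | measurable B]] `|`
  [set [set t | B (ralpha t)] | B in [set B : set R | measurable B]] `|`
  [set [set t | rgamma t x] | x in [set: label]] `|`
  [set A | exists x, exists2 B : set R, measurable B & A = [set t | B (rL t x)]].

Definition rtree_measurable (R : realType) : set (set (rtree R)) :=
  <<s @rtree_gens R >>.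

Definition rbirth (R : realType) (tau : R) (L : label -> R) (x : label) : R :=
  tau + \sum_(i < size x) L (take i x).

Definition Zraw (R : realType) (tau : R) (g : set label) (L : label -> R) (t : R)
  : \bar R :=
  \esum_(x in g)
     (if (0 < t - rbirth tau L x) && (t - rbirth tau L x <= L x)
      then 1 else 0)%:E.

Definition birth (R : realType) (w : Omega R) (x : label) : R :=
  rbirth (rtau (tr w)) (rL (tr w)) x.

Definition Z (R : realType) (w : Omega R) (t : R) : \bar R :=
  Zraw (rtau (tr w)) (rgamma (tr w)) (rL (tr w)) t.

(* Z_x = Z o T_x : the subtree rooted at x, birth time tau_x, lengths L_{xy} *)
Definition Zsub (R : realType) (w : Omega R) (x : label) (t : R) : \bar R :=
  Zraw (birth w x) (fun y => rgamma (tr w) (x ++ y)) (fun y => rL (tr w) (x ++ y)) t.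

Definition stopping_line (I : set label) : Prop :=
  (forall x, I x -> ulam x) /\
  (forall x y, I x -> I y -> anc x y -> x = y).

Definition line_le (I I' : set label) : Prop :=
  forall y, I' y -> exists2 x, I x & anc x y.

Definition kappa (R : realType) (I : set label) (w : Omega R) : set label :=
  [set y | rgamma (tr w) y /\ ~ (exists x, [/\ I x, rgamma (tr w) x & anc x y])].

Definition K (R : realType) (I : set label) (w : Omega R) : rtree R :=
  RTree (rtau (tr w)) (ralpha (tr w)) (kappa I w)
        (fun y => if `[< kappa I w y >] then rL (tr w) y else 0).

Definition F_ (R : realType) (I : set label) : set (set (Omega R)) :=
  [set K I @^-1` A | A in @rtree_measurable R].

Definition G_ (R : realType) (T : R) (I : set label) : set (set (Omega R)) :=
  <<s F_ I `|` [set [set w | (0 < Zsub w x T)%E] | x in I] >>.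

Definition zeta (R : realType) (w : Omega R) (T : R) : set label :=
  [set x | rgamma (tr w) x /\ birth w x < T <= birth w x + rL (tr w) x].

Definition is_lambda (R : realType) (w : Omega R) (T : R) (y : label) : Prop :=
  (forall x, zeta w T x -> anc y x) /\
  (forall y', (forall x, zeta w T x -> anc y' x) -> anc y' y).

Definition Lambda (R : realType) (w : Omega R) (T : R) : set label :=
  [set z | exists y k, [/\ is_lambda w T y, z = rcons y k,
                          rgamma (tr w) z & (0 < Zsub w z T)%E]].

From HB Require Import structures.
From mathcomp Require Import all_boot all_order all_algebra.
From mathcomp Require Import all_classical all_reals all_analysis.
From mathcomp Require Import measurable_realfun.
Import Order.TTheory GRing.Theory Num.Theory.
Local Open Scope classical_set_scope.
Local Open Scope ring_scope.
Set Implicit Arguments. Unset Strict Implicit.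

(* An extant branch a either survives pruning at I, and then "a is extant" is
   read off K_I, or it descends from some x in I, and then it is detected by
   Z_x(T) > 0.  Hence "some extant branch has property P" is G_I-measurable
   whenever P cannot tell a branch from its ancestor in I.  For q not strictly
   below I this covers Z_q(T) > 0 and "every extant branch descends from q",
   and pk is in Lambda^T iff every extant branch descends from p, none of the
   children of p carries all of them, and Z_pk(T) > 0.  Finally Lambda^T <= I
   asks each y in I for an ancestor in Lambda^T, and such an ancestor is never
   strictly below I; countable unions and intersections conclude. *)

Section Prefix.
Variable A : eqType.
Implicit Types (s t u : seq A) (k : A).

Lemma prefix_total s t u : prefix s u -> prefix t u -> prefix s t \/ prefix t s.
Proof.
rewrite !prefixE => /eqP su /eqP tu.
have [le|/ltnW le] := leqP (size s) (size t); [left|right].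
  by rewrite -tu take_takel // su.
by rewrite -su take_takel // tu.
Qed.

Lemma prefix_anti s t : prefix s t -> prefix t s -> s = t.
Proof.
move=> st ts; have /eqP size_st : size s == size t.
  by rewrite eqn_leq !size_prefix.
by apply/eqP; move: st; rewrite prefixE size_st take_size eq_sym.
Qed.

Lemma prefix_rconsP s t k : prefix s (rcons t k) -> s = rcons t k \/ prefix s t.
Proof.
move=> s_tk; have [st|ts] := prefix_total s_tk (prefix_rcons t k); first by right.
move: ts s_tk => /prefixP [[|j r] ->]; first by right; rewrite cats0 prefix_refl.
rewrite -cats1 => /prefixP [v]; rewrite -catA => /(congr1 (drop (size t))).
rewrite !drop_size_cat //; case: r => [[-> _]|//].
by left; rewrite cats1.
Qed.

Lemma prefix_strict_rcons s t : prefix s t -> ~ prefix t s ->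
  exists k, prefix (rcons s k) t.
Proof.
move=> /prefixP [[|k r] ->]; first by rewrite cats0 prefix_refl.
by exists k; rewrite -cat_rcons prefix_prefix.
Qed.

End Prefix.

Lemma neveu_prefix (g : set label) s t : neveu g -> g t -> prefix s t -> g s.
Proof.
case=> _ _ g_parent _ gt /prefixP [r et]; subst t; elim/last_ind: r gt => [|r k IH].
  by rewrite cats0.
by rewrite -rcons_cat => /g_parent /IH.
Qed.

Lemma esum_indicator_gt0 (R : realType) (T : choiceType) (S : set T) (b : T -> bool) :
  (0 < \esum_(x in S) (if b x then 1 else 0 : R)%:E)%E <-> exists2 x, S x & b x.
Proof.
split=> [|[x Sx bx]].
  apply: contraPP => none; rewrite esum1 ?ltxx // => x Sx.
  by case: ifP => // bx; case: none; exists x.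
apply: (@lt_le_trans _ _ 1%E) => //; apply: esum_ge; exists [set x].
  by split=> [|y ->]; [exact: finite_set1|].
by rewrite fsbig_set1 bx.
Qed.

Lemma rbirth_cat (R : realType) (tau : R) (L : label -> R) (x y : label) :
  rbirth (rbirth tau L x) (fun z => L (x ++ z)) y = rbirth tau L (x ++ y).
Proof.
rewrite /rbirth -addrA size_cat big_split_ord /=; congr (_ + (_ + _)).
  by apply: eq_bigr => i _; rewrite takel_cat // ltnW.
by apply: eq_bigr => i _; rewrite take_cat ltnNge leq_addr /= addKn.
Qed.

Lemma Zsub_gt0 (R : realType) (w : Omega R) (x : label) (T : R) :
  (0 < Zsub w x T)%E <-> exists2 a, zeta w T a & prefix x a.
Proof.
rewrite esum_indicator_gt0; split=> [[y gy]|[a [ga extant] /prefixP [y ea]]].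
  rewrite subr_gt0 lerBlDl /birth rbirth_cat => extant.
  by exists (x ++ y); [|exact: prefix_prefix].
by subst a; exists y => //; rewrite subr_gt0 lerBlDl /birth rbirth_cat.
Qed.

Lemma Zsub_nil (R : realType) (w : Omega R) (T : R) : Zsub w [::] T = Z w T.
Proof. by rewrite /Zsub /birth /rbirth big_ord0 addr0. Qed.

Section CountableUnions.
Context d (X : measurableType d) (U : countType).
Implicit Types (P : set U) (F : U -> set X).

Lemma countable_bigcup_measurable P F :
  (forall i, P i -> measurable (F i)) -> measurable (\bigcup_(i in P) F i).
Proof.
move=> mF; rewrite bigcup_mkcond; apply: countable_bigcupT_measurable => // i.
by case: ifPn => [/set_mem/mF|_]; [|exact: measurable0].
Qed.

Lemma countable_bigcap_measurable P F :
  (forall i, P i -> measurable (F i)) -> measurable (\bigcap_(i in P) F i).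
Proof.
move=> mF; rewrite -[X in measurable X]setCK setC_bigcap; apply: measurableC.
by apply: countable_bigcup_measurable => i /mF /measurableC.
Qed.

End CountableUnions.

(* [g_sigma_algebraType] requires a pointed carrier. *)
Section Instances.
Variable R : realType.

HB.instance Definition _ := gen_eqMixin (rtree R).
HB.instance Definition _ := gen_choiceMixin (rtree R).
HB.instance Definition _ := isPointed.Build (rtree R) (RTree 0 0 set0 (fun=> 0)).

Lemma valid_root : valid (RTree (0 : R) 0 [set [::]] (fun x => (x == [::])%:R)).
Proof.
split=> //= [|x ->//|x /eqP/negbTE->//]; split=> //= [x ->//|[]//|x ->].
by exists 0%N => -[].
Qed.

HB.instance Definition _ := gen_eqMixin (Omega R).
HB.instance Definition _ := gen_choiceMixin (Omega R).
HB.instance Definition _ := isPointed.Build (Omega R) (MkOmega valid_root).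

End Instances.

Section TreeMeasurability.
Variable R : realType.
Local Notation RT := (g_sigma_algebraType (@rtree_gens R)).

Lemma measurable_rtau : measurable_fun setT (@rtau R : RT -> R).
Proof. by move=> _ B mB; rewrite setTI; apply: sub_gen_smallest; do 3 left; exists B. Qed.

Lemma measurable_rL y : measurable_fun setT (fun t : RT => rL t y).
Proof. by move=> _ B mB; rewrite setTI; apply: sub_gen_smallest; right; exists y, B. Qed.

Lemma measurable_rgamma y : measurable [set t : RT | rgamma t y].
Proof. by apply: sub_gen_smallest; left; right; exists y. Qed.

Lemma measurable_rbirth a : measurable_fun setT (fun t : RT => rbirth (rtau t) (rL t) a).
Proof.
apply: measurable_funD; first exact: measurable_rtau.
by apply: measurable_sum => i; exact: measurable_rL.
Qed.

Definition extant_at (T : R) (a : label) : set (rtree R) :=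
  [set t | rgamma t a /\ rbirth (rtau t) (rL t) a < T <= rbirth (rtau t) (rL t) a + rL t a].

Lemma measurable_extant_at T a : measurable (extant_at T a : set RT).
Proof.
have -> : extant_at T a = [set t : RT | rgamma t a] `&`
    ((setT `&` (fun t : RT => rbirth (rtau t) (rL t) a) @^-1` `]-oo, T[) `&`
     (setT `&` (fun t : RT => rbirth (rtau t) (rL t) a + rL t a) @^-1` `[T, +oo[)).
  apply/seteqP; split=> t; rewrite /extant_at /= !in_itv /= andbT.
    by case=> ? /andP[-> ->].
  by case=> ? [[_ ->] [_ ->]].
apply: measurableI; first exact: measurable_rgamma.
apply: measurableI; first exact: measurable_rbirth.
by apply: measurable_funD (measurable_rbirth a) (measurable_rL a) _ _ _.
Qed.

End TreeMeasurability.

Section PrunedTree.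
Variables (R : realType) (I : set label).

Lemma kappa_prefix (w : Omega R) a b : kappa I w b -> prefix a b -> kappa I w a.
Proof.
case=> gb not_pruned ab; split.
  by case: (tr_valid w) => _ _ neveu_w _ _; exact: neveu_prefix neveu_w gb ab.
by case=> x [Ix gx xa]; apply: not_pruned; exists x; split=> //; exact: prefix_trans ab.
Qed.

Lemma K_rL (w : Omega R) a : kappa I w a -> rL (K I w) a = rL (tr w) a.
Proof. by move=> ka; rewrite /= asboolT. Qed.

Lemma K_birth (w : Omega R) a :
  kappa I w a -> rbirth (rtau (K I w)) (rL (K I w)) a = birth w a.
Proof.
move=> ka; congr (_ + _); apply: eq_bigr => i _.
by rewrite K_rL //; exact: kappa_prefix ka (prefix_take _ _).
Qed.

Lemma pruned_extantE (T : R) a :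
  [set w : Omega R | kappa I w a /\ zeta w T a] = K I @^-1` extant_at T a.
Proof.
apply/seteqP; split=> w /= [ka].
  by case=> _ extant; split=> //; rewrite K_birth // K_rL.
by rewrite K_birth // K_rL // => extant; split=> //; case: ka.
Qed.

End PrunedTree.

Definition above_line (I : set label) (q : label) : Prop :=
  forall x, I x -> prefix x q -> x = q.

Section Lambda.
Variables (R : realType) (w : Omega R) (T : R).

Lemma Lambda_nil : ~ Lambda w T [::].
Proof. by case=> y [k [_ /(congr1 size) + _ _]]; rewrite size_rcons. Qed.

Lemma Lambda_rconsE p k : Lambda w T (rcons p k) <->
  [/\ forall a, zeta w T a -> prefix p a,
      forall j, ~ (forall a, zeta w T a -> prefix (rcons p j) a) &
      (0 < Zsub w (rcons p k) T)%E].
Proof.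
split.
  case=> y [k' [[below maximal] /rcons_inj [-> ->] _ Zpos]]; split=> // j below_j.
  by have := size_prefix (maximal _ below_j); rewrite size_rcons ltnn.
case=> below not_below /[dup] /Zsub_gt0 [a0 za0 pk_a0] Zpos; exists p, k; split=> //.
- split=> // y below_y; have [//|py] := prefix_total (below_y a0 za0) (below a0 za0).
  apply: contrapT => not_yp; have [j pj_y] := prefix_strict_rcons py not_yp.
  by apply: (not_below j) => a za; exact: prefix_trans pj_y (below_y a za).
- case: za0 => ga0 _; case: (tr_valid w) => _ _ neveu_w _ _.
  exact: neveu_prefix neveu_w ga0 pk_a0.
Qed.

End Lambda.

Lemma above_line_rcons (I : set label) p k :
  above_line I (rcons p k) -> forall x, I x -> ~ prefix x p.
Proof.
move=> pk_above x Ix xp; have ex := pk_above x Ix (prefix_trans xp (prefix_rcons p k)).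
by move: (size_prefix xp); rewrite ex size_rcons ltnn.
Qed.

Lemma above_line_of_prefix (I : set label) y z :
  stopping_line I -> I y -> prefix z y -> above_line I z.
Proof.
case=> _ antichain Iy zy x Ix xz.
have xy := antichain x y Ix Iy (prefix_trans xz zy); subst x.
exact: prefix_anti.
Qed.

Section LineMeasurability.
Variables (R : realType) (T : R) (I : set label).
Local Notation GT :=
  (g_sigma_algebraType (F_ I `|` [set [set w : Omega R | (0 < Zsub w x T)%E] | x in I])).

Lemma measurable_pruned_extant a :
  measurable [set w : GT | kappa I w a /\ zeta w T a].
Proof.
rewrite pruned_extantE; apply: sub_gen_smallest; left.
by exists (extant_at T a) => //; exact: measurable_extant_at.
Qed.

Lemma measurable_Zsub_line x : I x -> measurable [set w : GT | (0 < Zsub w x T)%E].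
Proof. by move=> Ix; apply: sub_gen_smallest; right; exists x. Qed.

Lemma extant_pruned_or_below_line (w : Omega R) a : zeta w T a ->
  kappa I w a \/ exists2 x, I x & prefix x a /\ (0 < Zsub w x T)%E.
Proof.
move=> za; have [ka|not_ka] := pselect (kappa I w a); [by left|right].
have [x [Ix _ xa]] : exists x, [/\ I x, rgamma (tr w) x & anc x a].
  by apply: contrapT => ?; apply: not_ka; split=> //; case: za.
by exists x => //; split=> //; apply/Zsub_gt0; exists a.
Qed.

Lemma measurable_exists_extant (P : label -> Prop) :
  (forall x a, I x -> prefix x a -> P a <-> P x) ->
  measurable [set w : GT | exists2 a, zeta w T a & P a].
Proof.
move=> P_line.
have -> : [set w : GT | exists2 a, zeta w T a & P a] =
    \bigcup_(a in P) [set w | kappa I w a /\ zeta w T a] `|`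
    \bigcup_(x in I `&` P) [set w | (0 < Zsub w x T)%E].
  apply/seteqP; split=> w /=.
    move=> [a za Pa]; have [ka|[x Ix [xa Zx]]] := extant_pruned_or_below_line za.
      by left; exists a.
    by right; exists x => //; split=> //; rewrite -(P_line x a).
  case=> [[a Pa [_ za]]|[x [Ix Px] /Zsub_gt0 [a za xa]]]; first by exists a.
  by exists a => //; rewrite (P_line x a).
apply: measurableU; apply: countable_bigcup_measurable.
  by move=> a _; exact: measurable_pruned_extant.
by move=> x [Ix _]; exact: measurable_Zsub_line.
Qed.

Lemma above_line_prefix q x a : above_line I q -> I x -> prefix x a ->
  prefix q a <-> prefix q x.
Proof.
move=> q_above Ix xa; split=> [qa|qx]; last exact: prefix_trans xa.
by have [xq|//] := prefix_total xa qa; rewrite (q_above x) ?prefix_refl.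
Qed.

Lemma measurable_Zsub_above q : above_line I q ->
  measurable [set w : GT | (0 < Zsub w q T)%E].
Proof.
move=> q_above.
have -> : [set w : GT | (0 < Zsub w q T)%E] = [set w | exists2 a, zeta w T a & prefix q a].
  by apply/seteqP; split=> w /Zsub_gt0.
by apply: measurable_exists_extant => x a Ix xa; exact: above_line_prefix.
Qed.

Lemma measurable_extant_below q : above_line I q ->
  measurable [set w : GT | forall a, zeta w T a -> prefix q a].
Proof.
move=> q_above.
have -> : [set w : GT | forall a, zeta w T a -> prefix q a] =
    ~` [set w | exists2 a, zeta w T a & ~ prefix q a].
  apply/seteqP; split=> w /= below.
    by case=> a /below.
  by move=> a za; apply: contrapT => nqa; apply: below; exists a.
apply: measurableC; apply: measurable_exists_extant => x a Ix xa.
by rewrite (above_line_prefix q_above Ix xa).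
Qed.

Lemma measurable_Lambda z : above_line I z -> measurable [set w : GT | Lambda w T z].
Proof.
case/lastP: z => [_|p k pk_above].
  by rewrite (_ : [set w | _] = set0) //; apply/seteqP; split=> w // /Lambda_nil.
have no_line_ancestor := above_line_rcons pk_above.
rewrite (_ : [set w | _] = [set w | forall a, zeta w T a -> prefix p a] `&`
    \bigcap_j ~` [set w | forall a, zeta w T a -> prefix (rcons p j) a] `&`
    [set w | (0 < Zsub w (rcons p k) T)%E]).
  apply: measurableI; [apply: measurableI|exact: measurable_Zsub_above].
    by apply: measurable_extant_below => x /no_line_ancestor.
  apply: bigcapT_measurable => j; apply: measurableC; apply: measurable_extant_below.
  by move=> x Ix /prefix_rconsP [//|xp]; case: (no_line_ancestor x Ix xp).
apply/seteqP; split=> w /=.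
  by case/Lambda_rconsE=> below not_below Zpos; do 2?split=> //; move=> j _; exact: not_below.
by case=> -[below not_below] Zpos; apply/Lambda_rconsE; split=> // j; exact: not_below.
Qed.

End LineMeasurability.

Theorem lemma3 (R : realType) (T : R) (hT : 0 < T) (I : set label)
  (hI : stopping_line I) :
  G_ T I [set w : Omega R | (0 < Z w T)%E /\ line_le (Lambda w T) I].
Proof.
rewrite (_ : [set w | _] = [set w | (0 < Zsub w [::] T)%E] `&`
    \bigcap_(y in I) \bigcup_(z in [set z | prefix z y]) [set w | Lambda w T z]).
  (* [G_ T I] is the measurable predicate of the generated sigma-algebra. *)
  apply: (@measurableI _ (g_sigma_algebraType _)).
    by apply: measurable_Zsub_above => x _; rewrite prefixs0 => /eqP.
  apply: countable_bigcap_measurable => y Iy.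
  apply: countable_bigcup_measurable => z zy.
  exact: measurable_Lambda (above_line_of_prefix hI Iy zy).
by apply/seteqP; split=> w /=; rewrite Zsub_nil;
  case=> Zpos le_line; split=> // y Iy; have [z] := le_line y Iy; exists z.
Qed.
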